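(* Let $(X,\operatorname{d})$ be a bounded, complete metric space with a convex-like structure, and let $\mathfrak F=\{x_1,\dots,x_n\}\subset X$ be finite. Then $\operatorname{plane}(\mathfrak F)$ is $\sigma$-compact (hence separable).
   Context: Let $\operatorname{Prob}_n$ denote the set of probability measures on $\{1,\dots,n\}$ with the $\ell^1$-metric, and $X^{(n)}$ the $n$-fold product. A bounded metric space $(X,\operatorname{d})$ has a \emph{convex-like structure} if for every $n$ and $\mu\in\operatorname{Prob}_n$ there is a continuous map $\gamma_\mu\colon X^{(n)}\to X$ satisfying: (1) $\gamma_\mu(x_1,\dots,x_n)=\gamma_{\mu\circ\sigma}(x_{\sigma(1)},\dots,x_{\sigma(n)})$ for all $\sigma\in S_n$; (2) if $x_1=x_2$ then $\gamma_\mu(x_1,x_2,\dots,x_n)=\gamma_{\tilde\mu}(x_1,x_3,\dots,x_n)$ with $\tilde\mu(1)=\mu(1)+\mu(2)$, $\tilde\mu(j)=\mu(j+1)$ ($2\le j\le n-1$), and $\operatorname{Prob}_1$ gives the identity; (3) $\mu(i)=1$ implies $\gamma_\mu(x_1,\dots,x_n)=x_i$; (4) for a constant $C$, $\operatorname{d}(\gamma_\mu(\vec x),\gamma_{\tilde\mu}(\vec x))\le C\|\mu-\tilde\mu\|$ and $\operatorname{d}(\gamma_\mu(\vec x),\gamma_\mu(\vec y))\le\sum_i\mu(i)\operatorname{d}(x_i,y_i)$; (5) $\gamma_\nu(\gamma_\mu(x_1,\dots,x_n),\gamma_{\tilde\mu}(\tilde x_1,\dots,\tilde x_m))=\gamma_\eta(x_1,\dots,x_n,\tilde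 x_1,\dots,\tilde x_m)$ for $\nu\in\operatorname{Prob}_2$, where $\eta(i)=\nu(1)\mu(i)$, $\eta(n+j)=\nu(2)\tilde\mu(j)$. One writes $t_1x_1+\dots+t_nx_n:=\gamma_\mu(x_1,\dots,x_n)$ where $\mu(i)=t_i$. The convex hull is $\operatorname{conv}(\mathfrak F)=\{\sum_i\mu(i)x_i:\mu\in\operatorname{Prob}_n\}$, and the plane generated by $\mathfrak F$ is $\operatorname{plane}(\mathfrak F)=\{x\in X:\exists\, y,z\in\operatorname{conv}(\mathfrak F),\ 0<t\le1 \text{ with } tx+(1-t)y=z\}$. *)

From Stdlib Require Import Reals Lra List Permutation.
Import ListNotations.
Open Scope R_scope.

Definition is_metric {X : Type} (d : X -> X -> R) : Prop :=
  (forall x y, 0 <= d x y) /\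
  (forall x y, d x y = 0 <-> x = y) /\
  (forall x y, d x y = d y x) /\
  (forall x y z, d x z <= d x y + d y z).

Definition bounded_metric {X : Type} (d : X -> X -> R) : Prop :=
  exists M : R, forall x y, d x y <= M.

Definition cauchy_seq {X : Type} (d : X -> X -> R) (u : nat -> X) : Prop :=
  forall eps, 0 < eps -> exists N, forall m n, (N <= m)%nat -> (N <= n)%nat -> d (u m) (u n) < eps.

Definition seq_converges {X : Type} (d : X -> X -> R) (u : nat -> X) (l : X) : Prop :=
  forall eps, 0 < eps -> exists N, forall n, (N <= n)%nat -> d (u n) l < eps.

Definition complete_metric {X : Type} (d : X -> X -> R) : Prop :=
  forall u, cauchy_seq d u -> exists l, seq_converges d u l.

Definition open_set {X : Type} (d : X -> X -> R) (U : X -> Prop) : Prop :=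
  forall x, U x -> exists r, 0 < r /\ forall y, d x y < r -> U y.

Definition compact_set {X : Type} (d : X -> X -> R) (K : X -> Prop) : Prop :=
  forall (I : Type) (U : I -> X -> Prop),
    (forall i, open_set d (U i)) ->
    (forall x, K x -> exists i, U i x) ->
    exists l : list I, forall x, K x -> exists i, In i l /\ U i x.

Definition sigma_compact {X : Type} (d : X -> X -> R) (S : X -> Prop) : Prop :=
  exists K : nat -> X -> Prop,
    (forall n, compact_set d (K n)) /\
    (forall x, S x <-> exists n, K n x).

Definition sumR (l : list R) : R := fold_right Rplus 0 l.

Definition prob (mu : list R) : Prop :=
  Forall (fun t => 0 <= t) mu /\ sumR mu = 1.

Definition l1dist (mu nu : list R) : R :=
  sumR (map (fun p => Rabs (fst p - snd p)) (combine mu nu)).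

(* ---------- convex-like structure ----------
   g takes a list of weighted points [(t_1,x_1);...;(t_n,x_n)] and returns
   t_1 x_1 + ... + t_n x_n = gamma_mu(x_1,...,x_n) with mu(i) = t_i.
   It is only constrained on lists whose weight vector lies in Prob_n. *)
Definition valid {X : Type} (wl : list (R * X)) : Prop := prob (map fst wl).

Definition scale_w {X : Type} (c : R) (p : R * X) : R * X := (c * fst p, snd p).

Definition convex_like {X : Type} (d : X -> X -> R) (C : R)
  (g : list (R * X) -> X) : Prop :=
  (forall mu xs, prob mu -> length mu = length xs ->
     forall eps, 0 < eps -> exists delta, 0 < delta /\
       forall ys, Forall2 (fun x y => d x y < delta) xs ys ->
         d (g (combine mu xs)) (g (combine mu ys)) < eps) /\
  (forall wl wl', valid wl -> Permutation wl wl' -> g wl = g wl') /\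
  (forall a b x wl, valid ((a, x) :: (b, x) :: wl) ->
     g ((a, x) :: (b, x) :: wl) = g ((a + b, x) :: wl)) /\
  (forall x, g [(1, x)] = x) /\
  (forall wl x, valid wl -> In (1, x) wl -> g wl = x) /\
  (forall mu mu' xs, prob mu -> prob mu' ->
     length mu = length xs -> length mu' = length xs ->
     d (g (combine mu xs)) (g (combine mu' xs)) <= C * l1dist mu mu') /\
  (forall mu xs ys, prob mu -> length mu = length xs -> length ys = length xs ->
     d (g (combine mu xs)) (g (combine mu ys)) <=
     sumR (map (fun p => fst p * d (fst (snd p)) (snd (snd p)))
               (combine mu (combine xs ys)))) /\
  (forall nu1 nu2 wl1 wl2, prob [nu1; nu2] -> valid wl1 -> valid wl2 ->
     g [(nu1, g wl1); (nu2, g wl2)] =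
     g (map (scale_w nu1) wl1 ++ map (scale_w nu2) wl2)).

Definition conv {X : Type} (g : list (R * X) -> X) (xs : list X) (x : X) : Prop :=
  exists mu, prob mu /\ length mu = length xs /\ x = g (combine mu xs).

Definition plane {X : Type} (g : list (R * X) -> X) (xs : list X) (x : X) : Prop :=
  exists y z t, conv g xs y /\ conv g xs z /\ 0 < t /\ t <= 1 /\
    g [(t, x); (1 - t, y)] = z.

From Pilot Require Import Defs.
From Stdlib Require Import Reals List.
From Stdlib Require Import Lra Lia Permutation Classical ClassicalEpsilon.
Import ListNotations.
Open Scope R_scope.

(* plane(F) is the union over m of the sets of points x with t x + (1 - t) y = z for some
   y, z in conv(F) and t >= 1/(m+1).  Each of these is sequentially compact: along a
   subsequence the parameters (y, z, t) converge, so t x_k + (1 - t) y converges, and the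
   cancellation inequality  lam d(x, x') <= d(lam x + (1 - lam) w, lam x' + (1 - lam) w),
   which holds because the metric is bounded, makes (x_k) Cauchy.  Completeness and the
   Lipschitz properties of the convex-like structure then put its limit in the same set. *)

Definition strictly_increasing (phi : nat -> nat) : Prop :=
  forall k, (phi k < phi (S k))%nat.

Lemma strictly_increasing_le phi :
  strictly_increasing phi -> forall j k, (j <= k)%nat -> (phi j <= phi k)%nat.
Proof. intros Hphi j k Hjk; induction Hjk; [lia | specialize (Hphi m); lia]. Qed.

Lemma strictly_increasing_ge_id phi : strictly_increasing phi -> forall k, (k <= phi k)%nat.
Proof. intros Hphi k; induction k; [lia | specialize (Hphi k); lia]. Qed.

Lemma strictly_increasing_comp phi psi :
  strictly_increasing phi -> strictly_increasing psi ->
  strictly_increasing (fun k => phi (psi k)).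
Proof.
  intros Hphi Hpsi k.
  pose proof (strictly_increasing_le phi Hphi (S (psi k)) (psi (S k)) (Hpsi k)).
  specialize (Hphi (psi k)); lia.
Qed.

Lemma Un_cv_subseq u l phi :
  strictly_increasing phi -> Un_cv u l -> Un_cv (fun k => u (phi k)) l.
Proof.
  intros Hphi Hu eps Heps; destruct (Hu eps Heps) as [N HN]; exists N; intros k Hk.
  apply HN. pose proof (strictly_increasing_ge_id phi Hphi k); lia.
Qed.

Lemma Un_cv_dist_0 u l : Un_cv u l <-> Un_cv (fun k => Rabs (u k - l)) 0.
Proof.
  unfold Un_cv, Rdist.
  split; intros Hu eps Heps; destruct (Hu eps Heps) as [N HN]; exists N; intros k Hk;
    specialize (HN k Hk); rewrite ?Rminus_0_r, ?Rabs_Rabsolu in *; exact HN.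
Qed.

Lemma Un_cv_0_squeeze a b :
  (forall k, 0 <= a k <= b k) -> Un_cv b 0 -> Un_cv a 0.
Proof.
  unfold Un_cv, Rdist; intros Hab Hb eps Heps; destruct (Hb eps Heps) as [N HN].
  exists N; intros k Hk; specialize (HN k Hk); specialize (Hab k).
  rewrite Rminus_0_r in *; rewrite Rabs_right in HN by lra; rewrite Rabs_right by lra; lra.
Qed.

Lemma Un_cv_0_scal c u : Un_cv u 0 -> Un_cv (fun k => c * u k) 0.
Proof.
  intros Hu; rewrite <- (Rmult_0_r c); apply CV_mult; [| exact Hu].
  intros eps Heps; exists O; intros; unfold Rdist; rewrite Rminus_diag, Rabs_R0; lra.
Qed.

Lemma Un_cv_lb u l b : Un_cv u l -> (forall k, b <= u k) -> b <= l.
Proof.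
  intros Hu Hb; apply Rnot_lt_le; intros Hlt.
  destruct (Hu (b - l)) as [N HN]; [lra |].
  specialize (HN N (le_n N)); specialize (Hb N); unfold Rdist in HN.
  apply Rabs_def2 in HN; lra.
Qed.

Lemma Un_cv_ub u l b : Un_cv u l -> (forall k, u k <= b) -> l <= b.
Proof.
  intros Hu Hb; apply Rnot_lt_le; intros Hlt.
  destruct (Hu (l - b)) as [N HN]; [lra |].
  specialize (HN N (le_n N)); specialize (Hb N); unfold Rdist in HN.
  apply Rabs_def2 in HN; lra.
Qed.

Lemma inv_INR_S_lt eps : 0 < eps -> exists N, forall k, (N <= k)%nat -> / INR (S k) < eps.
Proof.
  intros Heps; destruct (archimed_cor1 eps Heps) as [N [HN HN0]]; exists N; intros k Hk.
  apply Rle_lt_trans with (2 := HN), Rinv_le_contravar; [apply lt_0_INR; lia |].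
  apply le_INR; lia.
Qed.

Lemma Bolzano_Weierstrass_subseq a b u : (forall k, a <= u k <= b) ->
  exists phi l, strictly_increasing phi /\ Un_cv (fun k => u (phi k)) l.
Proof.
  intros Hab.
  destruct (Bolzano_Weierstrass u _ (compact_P3 a b) Hab) as [l Hl].
  destruct (choice (fun kN p => (snd kN <= p)%nat /\ Rabs (u p - l) < / INR (S (fst kN))))
    as [next Hnext].
  { intros [k N]; simpl.
    assert (Hpos : 0 < / INR (S k)) by (apply Rinv_0_lt_compat, lt_0_INR; lia).
    destruct (Hl (disc l (mkposreal _ Hpos)) N) as [p [Hp1 Hp2]].
    - exists (mkposreal _ Hpos); intros y Hy; exact Hy.
    - exists p; split; auto. }
  set (phi := fix phi k := match k with O => next (O, O) | S k' => next (k, S (phi k')) end).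
  exists phi, l; split.
  - intros k; simpl; destruct (Hnext (S k, S (phi k))); simpl in *; lia.
  - intros eps Heps; destruct (inv_INR_S_lt eps Heps) as [N HN]; exists N; intros k Hk.
    apply Rlt_trans with (/ INR (S k)); [| apply HN; auto].
    destruct k; apply Hnext.
Qed.

Definition list_cv (v : nat -> list R) (w : list R) : Prop :=
  Un_cv (fun k => l1dist (v k) w) 0.

Lemma l1dist_cons a b l l' : l1dist (a :: l) (b :: l') = Rabs (a - b) + l1dist l l'.
Proof. reflexivity. Qed.

Lemma l1dist_nonneg l l' : 0 <= l1dist l l'.
Proof.
  revert l'; induction l as [|a l IH]; intros [|b l']; try (unfold l1dist; simpl; lra).
  rewrite l1dist_cons; pose proof (IH l'); pose proof (Rabs_pos (a - b)); lra.
Qed.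

Lemma list_cv_subseq v w phi :
  strictly_increasing phi -> list_cv v w -> list_cv (fun k => v (phi k)) w.
Proof. intros Hphi; apply (Un_cv_subseq (fun k => l1dist (v k) w) 0 phi Hphi). Qed.

Lemma list_cv_cons v a w : (forall k, length (v k) = S (length w)) ->
  list_cv v (a :: w) -> Un_cv (fun k => hd 0 (v k)) a /\ list_cv (fun k => tl (v k)) w.
Proof.
  intros Hlen Hv; split; [apply Un_cv_dist_0 |]; eapply Un_cv_0_squeeze; try exact Hv;
    intros k; cbv beta; specialize (Hlen k); destruct (v k) as [|b l];
    cbn [hd tl length] in *; try lia;
    rewrite l1dist_cons; pose proof (Rabs_pos (b - a)); pose proof (l1dist_nonneg l w);
    lra.
Qed.

Lemma list_Bolzano_Weierstrass a b L (v : nat -> list R) :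
  (forall k, length (v k) = L) -> (forall k, Forall (fun t => a <= t <= b) (v k)) ->
  exists phi w, strictly_increasing phi /\ length w = L /\ list_cv (fun k => v (phi k)) w.
Proof.
  revert v; induction L as [|L IH]; intros v Hlen Hab.
  - exists (fun k => k), []; split; [intros k; lia | split; [reflexivity |]].
    apply (Un_cv_0_squeeze _ (fun _ => 0)); [| intros eps Heps; exists O; intros;
      unfold Rdist; rewrite Rminus_0_r, Rabs_R0; lra].
    intros k; specialize (Hlen k); destruct (v k); [unfold l1dist; simpl; lra | discriminate].
  - destruct (IH (fun k => tl (v k))) as [phi1 [w [Hphi1 [Hw Hcv1]]]].
    { intros k; specialize (Hlen k); destruct (v k); simpl in *; lia. }
    { intros k; specialize (Hab k); destruct (v k); simpl; [constructor | now inversion Hab]. }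
    destruct (Bolzano_Weierstrass_subseq a b (fun k => hd 0 (v (phi1 k))))
      as [phi2 [l [Hphi2 Hcv2]]].
    { intros k; specialize (Hab (phi1 k)); specialize (Hlen (phi1 k)).
      destruct (v (phi1 k)); simpl in *; [lia | now inversion Hab]. }
    exists (fun k => phi1 (phi2 k)), (l :: w).
    split; [apply strictly_increasing_comp; auto | split; [simpl; lia |]].
    apply Un_cv_dist_0 in Hcv2; apply (list_cv_subseq _ _ _ Hphi2) in Hcv1.
    pose proof (CV_plus _ _ _ _ Hcv2 Hcv1) as Hsum; rewrite Rplus_0_r in Hsum.
    eapply Un_cv_0_squeeze; [| exact Hsum]; intros k; cbv beta.
    specialize (Hlen (phi1 (phi2 k))).
    destruct (v (phi1 (phi2 k))) as [|c l']; cbn [hd tl length] in *; [lia |].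
    rewrite l1dist_cons; pose proof (Rabs_pos (c - l)); pose proof (l1dist_nonneg l' w); lra.
Qed.

Lemma sumR_nonneg l : Forall (fun t => 0 <= t) l -> 0 <= sumR l.
Proof. induction 1; simpl; lra. Qed.

Lemma prob_Forall_01 l : prob l -> Forall (fun t => 0 <= t <= 1) l.
Proof.
  intros [Hnn Hsum]; rewrite <- Hsum; clear Hsum.
  induction Hnn as [|a l Ha Hnn IH]; constructor; simpl.
  - pose proof (sumR_nonneg l Hnn); lra.
  - eapply Forall_impl; [| exact IH]; intros t Ht; lra.
Qed.

Lemma Rabs_sumR_sub_le_l1dist l l' :
  length l = length l' -> Rabs (sumR l - sumR l') <= l1dist l l'.
Proof.
  revert l'; induction l as [|a l IH]; intros [|b l'] Hlen; simpl in *; try lia.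
  - unfold l1dist; simpl; rewrite Rminus_0_r, Rabs_R0; lra.
  - rewrite l1dist_cons; specialize (IH l' ltac:(lia)).
    replace (a + sumR l - (b + sumR l')) with ((a - b) + (sumR l - sumR l')) by ring.
    pose proof (Rabs_triang (a - b) (sumR l - sumR l')); lra.
Qed.

Lemma list_cv_nonneg w v : (forall k, length (v k) = length w) ->
  (forall k, Forall (fun t => 0 <= t) (v k)) -> list_cv v w -> Forall (fun t => 0 <= t) w.
Proof.
  revert v; induction w as [|a w IH]; intros v Hlen Hnn Hv; constructor;
    destruct (list_cv_cons v a w Hlen Hv) as [Hhd Htl].
  - apply (Un_cv_lb _ _ _ Hhd); intros k; specialize (Hnn k); specialize (Hlen k).
    destruct (v k); simpl in *; [lia | now inversion Hnn].
  - apply IH with (v := fun k => tl (v k)); auto; intros k; cbv beta.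
    + specialize (Hlen k); destruct (v k); simpl in *; lia.
    + specialize (Hnn k); destruct (v k); simpl; [constructor | now inversion Hnn].
Qed.

Lemma list_cv_prob v w : (forall k, prob (v k)) -> (forall k, length (v k) = length w) ->
  list_cv v w -> prob w.
Proof.
  intros Hprob Hlen Hv; split.
  - apply (list_cv_nonneg w v Hlen); auto; intros k; apply Hprob.
  - assert (Habs : Rabs (sumR w - 1) <= 0).
    { apply (Un_cv_lb _ _ _ Hv); intros k; destruct (Hprob k) as [_ Hsum].
      rewrite <- Hsum, Rabs_minus_sym; apply Rabs_sumR_sub_le_l1dist; auto. }
    pose proof (Rabs_pos (sumR w - 1)).
    destruct (Req_dec (sumR w) 1) as [E | E]; auto.
    pose proof (Rabs_pos_lt (sumR w - 1) ltac:(lra)); lra.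
Qed.

Lemma prob_seq_subseq L (v : nat -> list R) : (forall k, prob (v k) /\ length (v k) = L) ->
  exists phi w, strictly_increasing phi /\ prob w /\ length w = L /\
    list_cv (fun k => v (phi k)) w.
Proof.
  intros Hv.
  destruct (list_Bolzano_Weierstrass 0 1 L v) as [phi [w [Hphi [Hw Hcv]]]].
  - intros k; apply Hv.
  - intros k; apply prob_Forall_01, Hv.
  - exists phi, w; split; [exact Hphi | split; [| split; assumption]].
    apply (list_cv_prob (fun k => v (phi k))); auto; [intros k; apply Hv |].
    intros k; rewrite Hw; apply Hv.
Qed.

Lemma params_subseq L a (mu nu : nat -> list R) (t : nat -> R) :
  (forall k, prob (mu k) /\ length (mu k) = L) -> (forall k, prob (nu k) /\ length (nu k) = L) ->
  (forall k, a <= t k <= 1) ->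
  exists phi muI nuI tI, strictly_increasing phi /\
    prob muI /\ length muI = L /\ prob nuI /\ length nuI = L /\ a <= tI <= 1 /\
    Un_cv (fun k => l1dist (mu (phi k)) muI + 2 * Rabs (t (phi k) - tI) +
                    l1dist (nu (phi k)) nuI) 0.
Proof.
  intros Hmu Hnu Ht.
  destruct (prob_seq_subseq L mu Hmu) as [phi1 [muI [Hphi1 [HmuI [HlmuI Hcvmu]]]]].
  destruct (prob_seq_subseq L (fun k => nu (phi1 k)) (fun k => Hnu (phi1 k)))
    as [phi2 [nuI [Hphi2 [HnuI [HlnuI Hcvnu]]]]].
  destruct (Bolzano_Weierstrass_subseq a 1 (fun k => t (phi1 (phi2 k))) (fun k => Ht _))
    as [phi3 [tI [Hphi3 Hcvt]]].
  exists (fun k => phi1 (phi2 (phi3 k))), muI, nuI, tI.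
  split; [exact (strictly_increasing_comp _ _ Hphi1 (strictly_increasing_comp _ _ Hphi2 Hphi3)) |].
  do 4 (split; [assumption |]); split.
  - split; [apply (Un_cv_lb _ _ _ Hcvt) | apply (Un_cv_ub _ _ _ Hcvt)]; intros k; apply Ht.
  - pose proof (CV_plus _ _ _ _
      (CV_plus _ _ _ _
        (list_cv_subseq _ _ _ (strictly_increasing_comp _ _ Hphi2 Hphi3) Hcvmu)
        (Un_cv_0_scal 2 _ (proj1 (Un_cv_dist_0 _ _) Hcvt)))
      (list_cv_subseq _ _ _ Hphi3 Hcvnu)) as Hsum.
    rewrite !Rplus_0_r in Hsum; exact Hsum.
Qed.

Definition seq_compact {X : Type} (d : X -> X -> R) (K : X -> Prop) : Prop :=
  forall u : nat -> X, (forall k, K (u k)) ->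
  exists l, K l /\ forall eps, 0 < eps -> forall N, exists k, (N <= k)%nat /\ d (u k) l < eps.

Lemma list_choice {A B : Type} (L : list A) (P : A -> B -> Prop) :
  (forall a, In a L -> exists b, P a b) ->
  exists lb, forall a, In a L -> exists b, In b lb /\ P a b.
Proof.
  induction L as [|a L IH]; intros HL; [exists []; intros a [] |].
  destruct (HL a (or_introl eq_refl)) as [b Hb].
  destruct IH as [lb Hlb]; [intros a' Ha'; apply HL; right; exact Ha' |].
  exists (b :: lb); intros a' [<- | Ha'].
  - exists b; split; [left |]; auto.
  - destruct (Hlb a' Ha') as [b' [Hb' HP]]; exists b'; split; [right |]; auto.
Qed.

Section SeqCompact.
Variables (X : Type) (d : X -> X -> R) (K : X -> Prop).
Hypothesis Hmet : is_metric d.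
Hypothesis HK : seq_compact d K.

Lemma seq_compact_Lebesgue_number (I : Type) (U : I -> X -> Prop) :
  (forall i, Defs.open_set d (U i)) -> (forall x, K x -> exists i, U i x) ->
  exists r, 0 < r /\ forall x, K x -> exists i, forall y, d x y < r -> U i y.
Proof.
  destruct Hmet as (_ & _ & Hsym & Htri); intros Hopen Hcov.
  apply NNPP; intros Hnot.
  assert (Hbad : forall k : nat, exists x, K x /\
            forall i, exists y, d x y < / INR (S k) /\ ~ U i y).
  { intros k; apply NNPP; intros Hk; apply Hnot; exists (/ INR (S k)).
    split; [apply Rinv_0_lt_compat, lt_0_INR; lia |].
    intros x Kx; apply NNPP; intros Hx; apply Hk; exists x; split; [exact Kx |].
    intros i; apply NNPP; intros Hi; apply Hx; exists i; intros y Hy.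
    apply NNPP; intros Hy'; apply Hi; exists y; auto. }
  destruct (choice _ Hbad) as [u Hu].
  destruct (HK u (fun k => proj1 (Hu k))) as [l [Kl Hl]].
  destruct (Hcov l Kl) as [i Hi]; destruct (Hopen i l Hi) as [r [Hr Hball]].
  destruct (inv_INR_S_lt (r / 2)) as [N HN]; [lra |].
  destruct (Hl (r / 2) ltac:(lra) N) as [k [Hk Hkl]].
  destruct (proj2 (Hu k) i) as [y [Hy HUy]]; apply HUy, Hball.
  specialize (HN k Hk); pose proof (Htri l (u k) y); rewrite Hsym in Hkl; lra.
Qed.

Lemma seq_compact_totally_bounded r : 0 < r ->
  exists L, Forall K L /\ forall x, K x -> exists c, In c L /\ d c x < r.
Proof.
  destruct Hmet as (_ & _ & Hsym & Htri); intros Hr.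
  destruct (classic (exists x, K x)) as [[x0 Kx0] | Hempty].
  2: { exists []; split; [constructor | intros x Kx; exfalso; eauto]. }
  apply NNPP; intros Hnot.
  assert (Hfar : forall L, exists x, Forall K L -> K x /\ forall c, In c L -> r <= d c x).
  { intros L; apply NNPP; intros HL; apply Hnot; exists L.
    destruct (classic (Forall K L)) as [HKL | HKL].
    2: { exfalso; apply HL; exists x0; intros; contradiction. }
    split; [exact HKL |]; intros x Kx; apply NNPP; intros Hx; apply HL; exists x.
    intros _; split; [exact Kx |]; intros c Hc; apply Rnot_lt_le; intros Hcx.
    apply Hx; exists c; auto. }
  destruct (choice _ Hfar) as [next Hnext].
  (* [net k] lists the first [k] points of an [r]-separated sequence in [K] *)
  set (net := fix net k := match k with O => [] | S k' => net k' ++ [next (net k')] end).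
  assert (Hnet : forall k, Forall K (net k)).
  { induction k; simpl; [constructor |]; apply Forall_app; split; [exact IHk |].
    constructor; [apply (Hnext _ IHk) | constructor]. }
  set (u := fun k => next (net k)).
  assert (Hsep : forall j k, (j < k)%nat -> r <= d (u j) (u k)).
  { intros j k Hjk; apply (Hnext _ (Hnet k)).
    induction Hjk; simpl; apply in_or_app; [right; left | left]; auto. }
  destruct (HK u (fun k => proj1 (Hnext _ (Hnet k)))) as [l [_ Hl]].
  destruct (Hl (r / 2) ltac:(lra) O) as [j [_ Hj]].
  destruct (Hl (r / 2) ltac:(lra) (S j)) as [k [Hk Hkl]].
  specialize (Hsep j k Hk); pose proof (Htri (u j) l (u k)) as Hjk; rewrite (Hsym l) in Hjk; lra.
Qed.

Lemma seq_compact_compact : compact_set d K.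
Proof.
  intros I U Hopen Hcov.
  destruct (seq_compact_Lebesgue_number I U Hopen Hcov) as [r [Hr Hleb]].
  destruct (seq_compact_totally_bounded r Hr) as [L [HKL HL]].
  destruct (list_choice L (fun c i => forall y, d c y < r -> U i y)) as [li Hli].
  { intros c Hc; apply Hleb; exact (proj1 (Forall_forall K L) HKL c Hc). }
  exists li; intros x Kx.
  destruct (HL x Kx) as [c [Hc Hcx]]; destruct (Hli c Hc) as [i [Hi HU]].
  exists i; auto.
Qed.

End SeqCompact.

Ltac solve_prob :=
  unfold valid, prob; simpl; split;
  [repeat (apply Forall_cons; [simpl; lra |]); apply Forall_nil | simpl; lra].

Section ConvexLike.
Variables (X : Type) (d : X -> X -> R) (C M : R) (g : list (R * X) -> X).

Hypothesis d_nonneg : forall x y, 0 <= d x y.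
Hypothesis d_eq0 : forall x y, d x y = 0 <-> x = y.
Hypothesis d_sym : forall x y, d x y = d y x.
Hypothesis d_triangle : forall x y z, d x z <= d x y + d y z.
Hypothesis d_bounded : forall x y, d x y <= M.

Hypothesis gamma_perm : forall wl wl', valid wl -> Permutation wl wl' -> g wl = g wl'.
Hypothesis gamma_merge : forall a b x wl, valid ((a, x) :: (b, x) :: wl) ->
  g ((a, x) :: (b, x) :: wl) = g ((a + b, x) :: wl).
Hypothesis gamma_dirac : forall wl x, valid wl -> In (1, x) wl -> g wl = x.
Hypothesis gamma_lip_weights : forall mu mu' xs, prob mu -> prob mu' ->
  length mu = length xs -> length mu' = length xs ->
  d (g (combine mu xs)) (g (combine mu' xs)) <= C * l1dist mu mu'.
Hypothesis gamma_lip_points : forall mu xs ys, prob mu ->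
  length mu = length xs -> length ys = length xs ->
  d (g (combine mu xs)) (g (combine mu ys)) <=
  sumR (map (fun p => fst p * d (fst (snd p)) (snd (snd p))) (combine mu (combine xs ys))).
Hypothesis gamma_assoc : forall nu1 nu2 wl1 wl2, prob [nu1; nu2] -> valid wl1 -> valid wl2 ->
  g [(nu1, g wl1); (nu2, g wl2)] = g (map (scale_w nu1) wl1 ++ map (scale_w nu2) wl2).

Lemma d_refl x : d x x = 0.
Proof. apply d_eq0; reflexivity. Qed.

Lemma gamma2_lip_points p c a a' b b' : 0 <= p -> 0 <= c -> p + c = 1 ->
  d (g [(p, a); (c, b)]) (g [(p, a'); (c, b')]) <= p * d a a' + c * d b b'.
Proof.
  intros; pose proof (gamma_lip_points [p; c] [a; b] [a'; b'] ltac:(solve_prob) eq_refl eq_refl).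
  simpl in *; lra.
Qed.

Lemma gamma2_lip_weights t t' x y : 0 <= t <= 1 -> 0 <= t' <= 1 ->
  d (g [(t, x); (1 - t, y)]) (g [(t', x); (1 - t', y)]) <= 2 * C * Rabs (t - t').
Proof.
  intros Ht Ht'; pose proof (gamma_lip_weights [t; 1 - t] [t'; 1 - t'] [x; y]
    ltac:(solve_prob) ltac:(solve_prob) eq_refl eq_refl) as H.
  unfold l1dist in H; simpl in H.
  replace (1 - t - (1 - t')) with (- (t - t')) in H by ring; rewrite Rabs_Ropp in H; lra.
Qed.

Lemma gamma_regroup a b lam c x y u w :
  0 <= a -> 0 <= b -> 0 < a + b -> 0 <= lam <= 1 -> 0 <= c -> a + b + c = 1 ->
  g [(a + b, g [(a / (a + b), x); (b / (a + b), y)]); (c, g [(lam, u); (1 - lam, w)])]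
  = g [(a, x); (b, y); (c * lam, u); (c * (1 - lam), w)].
Proof.
  intros.
  assert (0 <= a / (a + b)) by (apply Rmult_le_pos; [lra | left; apply Rinv_0_lt_compat; lra]).
  assert (0 <= b / (a + b)) by (apply Rmult_le_pos; [lra | left; apply Rinv_0_lt_compat; lra]).
  rewrite gamma_assoc; [| solve_prob | | solve_prob].
  - unfold scale_w; simpl; repeat f_equal; field; lra.
  - unfold valid, prob; simpl; split;
      [repeat (apply Forall_cons; [simpl; lra |]); apply Forall_nil | field; lra].
Qed.

Lemma gamma_merge13 a b a' e x y w : 0 <= a -> 0 <= b -> 0 <= a' -> 0 <= e ->
  a + b + a' + e = 1 ->
  g [(a, x); (b, y); (a', x); (e, w)] = g [(a + a', x); (b, y); (e, w)].
Proof.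
  intros; rewrite (gamma_perm _ [(a, x); (a', x); (b, y); (e, w)]); [| solve_prob |].
  - apply gamma_merge; solve_prob.
  - do 2 constructor.
Qed.

Lemma gamma_merge23 a b b' e x y w : 0 <= a -> 0 <= b -> 0 <= b' -> 0 <= e ->
  a + b + b' + e = 1 ->
  g [(a, x); (b, y); (b', y); (e, w)] = g [(a, x); (b + b', y); (e, w)].
Proof.
  intros; rewrite (gamma_perm _ [(b, y); (b', y); (a, x); (e, w)]); [| solve_prob |].
  - rewrite gamma_merge; [apply gamma_perm; [solve_prob | constructor] | solve_prob].
  - eapply perm_trans; [apply perm_swap | constructor; apply perm_swap].
Qed.

Lemma gamma_near_first a e x y w : 0 <= a -> 0 <= e -> a + e = 1 ->
  d x (g [(a, x); (0, y); (e, w)]) <= e * M.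
Proof.
  intros.
  assert (Hx : g [(a, x); (0, y); (e, x)] = x).
  { rewrite (gamma_perm _ [(a, x); (e, x); (0, y)]); [| solve_prob | do 2 constructor].
    rewrite gamma_merge by solve_prob; apply gamma_dirac; [solve_prob | left; f_equal; lra]. }
  pose proof (gamma_lip_points [a; 0; e] [x; y; x] [x; y; w] ltac:(solve_prob) eq_refl eq_refl)
    as Hlip.
  simpl in Hlip; rewrite Hx, !d_refl in Hlip.
  pose proof (d_bounded x w); pose proof (d_nonneg x w); nra.
Qed.

Lemma gamma_near_second b e x y w : 0 <= b -> 0 <= e -> b + e = 1 ->
  d y (g [(0, x); (b, y); (e, w)]) <= e * M.
Proof.
  intros; rewrite (gamma_perm _ [(b, y); (0, x); (e, w)]); [| solve_prob | constructor].
  apply gamma_near_first; assumption.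
Qed.

Definition chain_weight (lam : R) (N : nat) : R := / (1 - lam + INR N * lam).

(* [chain] runs from near [x] (at [k = 0]) to near [y] (at [k = N]); consecutive points differ
   only in one block of weight [chain_weight lam N], which holds [lam x + (1 - lam) w] in one
   and [lam y + (1 - lam) w] in the other. *)
Definition chain (lam : R) (N : nat) (x y w : X) (k : nat) : X :=
  let c := chain_weight lam N in
  g [((INR N - INR k) * (c * lam), x); (INR k * (c * lam), y); (c * (1 - lam), w)].

Lemma chain_weight_spec lam N : 0 < lam < 1 ->
  0 < chain_weight lam N /\ chain_weight lam N * (1 - lam + INR N * lam) = 1.
Proof.
  intros Hlam; pose proof (pos_INR N).
  assert (0 < 1 - lam + INR N * lam) by nra.
  unfold chain_weight; split; [apply Rinv_0_lt_compat | field]; lra.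
Qed.

Lemma chain_step lam N x y w k : 0 < lam < 1 -> (2 <= N)%nat -> (S k <= N)%nat ->
  d (chain lam N x y w k) (chain lam N x y w (S k)) <=
  chain_weight lam N * d (g [(lam, x); (1 - lam, w)]) (g [(lam, y); (1 - lam, w)]).
Proof.
  intros Hlam HN Hk.
  destruct (chain_weight_spec lam N Hlam) as [Hc Hc1]; set (c := chain_weight lam N) in *.
  assert (HN2 : 2 <= INR N) by (apply (le_INR 2); exact HN).
  assert (HkN : INR k + 1 <= INR N) by (rewrite <- S_INR; apply le_INR; exact Hk).
  pose proof (pos_INR k).
  set (a := (INR N - INR k - 1) * (c * lam)); set (b := INR k * (c * lam)).
  assert (Hcl : 0 < c * lam) by nra.
  assert (Ha : 0 <= a) by (apply Rmult_le_pos; lra).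
  assert (Hb : 0 <= b) by (apply Rmult_le_pos; lra).
  assert (Hab : 0 < a + b).
  { replace (a + b) with ((INR N - 1) * (c * lam)) by (unfold a, b; ring).
    apply Rmult_lt_0_compat; lra. }
  assert (Habc : a + b + c = 1) by (rewrite <- Hc1; unfold a, b; ring).
  set (z := g [(a / (a + b), x); (b / (a + b), y)]).
  assert (E1 : chain lam N x y w k = g [(a + b, z); (c, g [(lam, x); (1 - lam, w)])]).
  { unfold z; rewrite gamma_regroup, gamma_merge13 by nra.
    unfold chain; fold c; do 3 f_equal; unfold a; ring. }
  assert (E2 : chain lam N x y w (S k) = g [(a + b, z); (c, g [(lam, y); (1 - lam, w)])]).
  { unfold z; rewrite gamma_regroup, gamma_merge23 by nra.
    unfold chain; fold c; rewrite S_INR; f_equal; f_equal; [| f_equal];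
      f_equal; unfold a, b; ring. }
  rewrite E1, E2.
  pose proof (gamma2_lip_points (a + b) c z z (g [(lam, x); (1 - lam, w)])
    (g [(lam, y); (1 - lam, w)]) ltac:(lra) ltac:(lra) ltac:(lra)) as Hlip.
  rewrite d_refl in Hlip; lra.
Qed.

Lemma dist_telescope (P : nat -> X) (s : R) (N : nat) :
  (forall k, (S k <= N)%nat -> d (P k) (P (S k)) <= s) ->
  forall k, (k <= N)%nat -> d (P O) (P k) <= INR k * s.
Proof.
  intros Hstep; induction k as [|k IH]; intros Hk.
  - rewrite d_refl; simpl; lra.
  - rewrite S_INR; pose proof (d_triangle (P O) (P k) (P (S k))).
    pose proof (Hstep k Hk); specialize (IH ltac:(lia)); lra.
Qed.

Lemma gamma_cancel_approx lam x y w (N : nat) : 0 < lam < 1 -> (2 <= N)%nat ->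
  lam * d x y <=
  d (g [(lam, x); (1 - lam, w)]) (g [(lam, y); (1 - lam, w)]) + 2 * M / INR N.
Proof.
  intros Hlam HN.
  set (D := d (g [(lam, x); (1 - lam, w)]) (g [(lam, y); (1 - lam, w)])).
  destruct (chain_weight_spec lam N Hlam) as [Hc Hc1]; set (c := chain_weight lam N) in *.
  assert (HN2 : 2 <= INR N) by (apply (le_INR 2); exact HN).
  assert (Hcl : 0 < c * lam) by nra.
  set (P := chain lam N x y w).
  assert (Hx : d x (P O) <= c * (1 - lam) * M).
  { unfold P, chain; fold c; simpl INR; rewrite Rminus_0_r, Rmult_0_l.
    apply gamma_near_first; [apply Rmult_le_pos | nra | rewrite <- Hc1 at 2; ring]; lra. }
  assert (Hy : d y (P N) <= c * (1 - lam) * M).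
  { unfold P, chain; fold c; rewrite Rminus_diag, Rmult_0_l.
    apply gamma_near_second; [apply Rmult_le_pos | nra | rewrite <- Hc1 at 2; ring]; lra. }
  pose proof (dist_telescope P (c * D) N (fun k Hk => chain_step lam N x y w k Hlam HN Hk) N
    (le_n N)) as HPN.
  assert (Hxy : d x y <= 2 * (c * (1 - lam) * M) + INR N * (c * D)).
  { pose proof (d_triangle x (P O) y); pose proof (d_triangle (P O) (P N) y).
    rewrite (d_sym y) in Hy; lra. }
  assert (HM : 0 <= M) by (pose proof (d_bounded x x); pose proof (d_nonneg x x); lra).
  assert (HD : 0 <= D) by apply d_nonneg.
  (* [lam c N <= 1] and [lam c (1 - lam) N <= 1] since [c (1 - lam + N lam) = 1] *)
  assert (Hlam_cN : lam * (INR N * c) <= 1) by nra.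
  assert (Hlam_ce : lam * (c * (1 - lam)) <= / INR N).
  { apply (Rmult_le_reg_r (INR N)); [lra |]; rewrite Rinv_l by lra; nra. }
  unfold Rdiv; apply Rle_trans with (lam * (2 * (c * (1 - lam) * M) + INR N * (c * D)));
    [apply Rmult_le_compat_l; lra |].
  assert (lam * (INR N * (c * D)) <= D) by nra.
  assert (lam * (2 * (c * (1 - lam) * M)) <= 2 * M * / INR N) by nra.
  lra.
Qed.

Lemma gamma_cancel lam x y w : 0 < lam <= 1 ->
  lam * d x y <= d (g [(lam, x); (1 - lam, w)]) (g [(lam, y); (1 - lam, w)]).
Proof.
  intros Hlam; destruct (Req_dec lam 1) as [-> | Hlam1].
  - rewrite (gamma_dirac _ x), (gamma_dirac _ y); try solve_prob; try (left; reflexivity).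
    lra.
  - apply Rnot_lt_le; intros Hlt.
    set (D := d (g [(lam, x); (1 - lam, w)]) (g [(lam, y); (1 - lam, w)])) in *.
    assert (HM : 0 <= M) by (pose proof (d_bounded x x); pose proof (d_nonneg x x); lra).
    destruct (inv_INR_S_lt ((lam * d x y - D) / (2 * M + 1))) as [N HN].
    { apply Rdiv_lt_0_compat; lra. }
    pose proof (gamma_cancel_approx lam x y w (S (S N)) ltac:(lra) ltac:(lia)) as Happrox.
    specialize (HN (S N) ltac:(lia)).
    assert (HSN : 0 < INR (S (S N))) by (apply lt_0_INR; lia).
    assert (2 * M / INR (S (S N)) < lam * d x y - D); [| fold D in Happrox; lra].
    apply Rle_lt_trans with ((2 * M + 1) * / INR (S (S N))).
    + unfold Rdiv; apply Rmult_le_compat_r; [left; apply Rinv_0_lt_compat |]; lra.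
    + apply (Rmult_lt_reg_l (/ (2 * M + 1))); [apply Rinv_0_lt_compat; lra |].
      rewrite <- Rmult_assoc, Rinv_l by lra; unfold Rdiv in HN; lra.
Qed.

Lemma seq_converges_Un_cv (x : nat -> X) l :
  seq_converges d x l -> Un_cv (fun k => d (x k) l) 0.
Proof.
  intros Hx eps Heps; destruct (Hx eps Heps) as [N HN]; exists N; intros k Hk.
  unfold Rdist; rewrite Rminus_0_r, Rabs_right by (apply Rle_ge, d_nonneg); auto.
Qed.

Lemma gamma_cancel_limit t y z (x : nat -> X) : complete_metric d -> 0 < t <= 1 ->
  Un_cv (fun k => d (g [(t, x k); (1 - t, y)]) z) 0 ->
  exists l, seq_converges d x l /\ g [(t, l); (1 - t, y)] = z.
Proof.
  intros Hcompl Ht Hcv.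
  set (A := fun k => g [(t, x k); (1 - t, y)]) in *.
  assert (Hcauchy : cauchy_seq d x).
  { intros eps Heps; destruct (Hcv (t * eps / 2)) as [N HN]; [nra |].
    exists N; intros j k Hj Hk.
    pose proof (HN j Hj) as Hzj; pose proof (HN k Hk) as Hzk; unfold Rdist in Hzj, Hzk.
    rewrite Rminus_0_r, Rabs_right in Hzj, Hzk by (apply Rle_ge, d_nonneg).
    pose proof (gamma_cancel t (x j) (x k) y Ht).
    pose proof (d_triangle (A j) z (A k)); rewrite (d_sym z) in *.
    apply (Rmult_lt_reg_l t); [lra |]; fold (A j) (A k) in *; lra. }
  destruct (Hcompl x Hcauchy) as [l Hl]; exists l; split; [exact Hl |].
  apply d_eq0, Rle_antisym; [| apply d_nonneg].
  apply (Un_cv_lb (fun k => d (x k) l + d (A k) z)).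
  - rewrite <- (Rplus_0_r 0); apply CV_plus; [apply seq_converges_Un_cv |]; assumption.
  - intros k.
    pose proof (gamma2_lip_points t (1 - t) l (x k) y y ltac:(lra) ltac:(lra) ltac:(lra)).
    pose proof (d_triangle (g [(t, l); (1 - t, y)]) (A k) z).
    rewrite d_refl, (d_sym l) in *; pose proof (d_nonneg (x k) l); unfold A in *; nra.
Qed.

Variable xs : list X.

Definition barycenter (mu : list R) : X := g (combine mu xs).

Definition level_witness (m : nat) (x : X) (mu nu : list R) (t : R) : Prop :=
  prob mu /\ length mu = length xs /\ prob nu /\ length nu = length xs /\
  / INR (S m) <= t <= 1 /\ g [(t, x); (1 - t, barycenter mu)] = barycenter nu.

Definition plane_level (m : nat) (x : X) : Prop :=
  exists mu nu t, level_witness m x mu nu t.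

Lemma barycenter_lip mu mu' : prob mu -> prob mu' ->
  length mu = length xs -> length mu' = length xs ->
  d (barycenter mu) (barycenter mu') <= C * l1dist mu mu'.
Proof. apply gamma_lip_weights. Qed.

Lemma plane_equation_perturbation x t t' mu mu' nu nu' :
  0 <= t <= 1 -> 0 <= t' <= 1 -> prob mu -> prob mu' -> prob nu -> prob nu' ->
  length mu = length xs -> length mu' = length xs ->
  length nu = length xs -> length nu' = length xs ->
  g [(t, x); (1 - t, barycenter mu)] = barycenter nu ->
  d (g [(t', x); (1 - t', barycenter mu')]) (barycenter nu') <=
  C * (l1dist mu mu' + 2 * Rabs (t - t') + l1dist nu nu').
Proof.
  intros Ht Ht' Hmu Hmu' Hnu Hnu' Hlmu Hlmu' Hlnu Hlnu' Heq.
  set (z := g [(t', x); (1 - t', barycenter mu)]).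
  assert (Hz : d (g [(t', x); (1 - t', barycenter mu')]) z <= C * l1dist mu mu').
  { pose proof (gamma2_lip_points t' (1 - t') x x (barycenter mu') (barycenter mu)
      ltac:(lra) ltac:(lra) ltac:(lra)) as Hlip.
    rewrite d_refl, (d_sym (barycenter mu')) in Hlip.
    pose proof (barycenter_lip mu mu' Hmu Hmu' Hlmu Hlmu').
    pose proof (d_nonneg (barycenter mu) (barycenter mu')); fold z in Hlip; nra. }
  assert (Hnu_z : d z (barycenter nu) <= 2 * C * Rabs (t - t')).
  { rewrite <- Heq, Rabs_minus_sym; apply gamma2_lip_weights; assumption. }
  pose proof (barycenter_lip nu nu' Hnu Hnu' Hlnu Hlnu').
  pose proof (d_triangle (g [(t', x); (1 - t', barycenter mu')]) z (barycenter nu')).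
  pose proof (d_triangle z (barycenter nu) (barycenter nu')).
  lra.
Qed.

Lemma plane_level_seq_compact m : complete_metric d -> seq_compact d (plane_level m).
Proof.
  intros Hcompl u Hu.
  destruct (choice (fun k p => level_witness m (u k) (fst (fst p)) (snd (fst p)) (snd p)))
    as [p Hp].
  { intros k; destruct (Hu k) as (mu & nu & t & Hk); exists (mu, nu, t); exact Hk. }
  set (mu := fun k => fst (fst (p k))); set (nu := fun k => snd (fst (p k)));
    set (t := fun k => snd (p k)).
  assert (Hm : 0 < / INR (S m)) by (apply Rinv_0_lt_compat, lt_0_INR; lia).
  destruct (params_subseq (length xs) (/ INR (S m)) mu nu t)
    as (phi & muI & nuI & tI & Hphi & HmuI & HlmuI & HnuI & HlnuI & HtI & Hcv).
  1-3: intros k; destruct (Hp k) as (? & ? & ? & ? & ? & _); auto.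
  assert (HcvA : Un_cv (fun k =>
    d (g [(tI, u (phi k)); (1 - tI, barycenter muI)]) (barycenter nuI)) 0).
  { eapply Un_cv_0_squeeze; [| exact (Un_cv_0_scal C _ Hcv)]; intros k; cbv beta.
    split; [apply d_nonneg |].
    destruct (Hp (phi k)) as (Hmuk & Hlmuk & Hnuk & Hlnuk & Htk & Heqk).
    apply (plane_equation_perturbation _ (t (phi k))); auto; unfold t; lra. }
  destruct (gamma_cancel_limit tI _ _ (fun k => u (phi k)) Hcompl ltac:(lra) HcvA)
    as [l [Hl Hgl]].
  exists l; split.
  - exists muI, nuI, tI; exact (conj HmuI (conj HlmuI (conj HnuI (conj HlnuI (conj HtI Hgl))))).
  - intros eps Heps N; destruct (Hl eps Heps) as [N' HN']; exists (phi (max N N')); split.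
    + pose proof (strictly_increasing_ge_id phi Hphi (max N N')); lia.
    + apply HN'; lia.
Qed.

Lemma plane_iff_level x : plane g xs x <-> exists m, plane_level m x.
Proof.
  split.
  - intros (y & z & t & [mu (Hmu & Hlmu & ->)] & [nu (Hnu & Hlnu & ->)] & Ht0 & Ht1 & Heq).
    destruct (inv_INR_S_lt t Ht0) as [m Hm]; specialize (Hm m (le_n m)).
    exists m, mu, nu, t.
    refine (conj Hmu (conj Hlmu (conj Hnu (conj Hlnu (conj (conj _ Ht1) Heq))))); lra.
  - intros (m & mu & nu & t & Hmu & Hlmu & Hnu & Hlnu & Ht & Heq).
    assert (0 < / INR (S m)) by (apply Rinv_0_lt_compat, lt_0_INR; lia).
    exists (barycenter mu), (barycenter nu), t.
    refine (conj _ (conj _ (conj _ (conj _ Heq)))); [exists mu | exists nu | lra | lra]; auto.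
Qed.

End ConvexLike.

Theorem lemma2p6 (X : Type) (d : X -> X -> R) (g : list (R * X) -> X) (C : R)
  (Hmet : is_metric d) (Hbdd : bounded_metric d) (Hcompl : complete_metric d)
  (Hconv : convex_like d C g) (xs : list X) :
  sigma_compact d (plane g xs).
Proof.
  destruct Hbdd as [M HM].
  pose proof Hmet as (Hnn & Heq & Hsym & Htri).
  destruct Hconv as (_ & Hperm & Hmerge & _ & Hdirac & Hlipw & Hlipp & Hassoc).
  exists (plane_level X g xs); split.
  - intros m; apply seq_compact_compact; [exact Hmet |].
    eapply plane_level_seq_compact; eauto.
  - intros x; apply plane_iff_level.
Qed.
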